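(* Let $f\in\mathcal{H}^s_{4,3}$. Then $f\in\mathcal{P}^{s+}_{4,3}$ if and only if $f(0,0,0,1)\ge0$, $f(0,0,1,1)\ge0$, $f(0,1,1,1)\ge0$ and $f(1,1,1,1)\ge0$.
   Context: $\mathcal{H}^s_{4,3}$ is the real vector space of symmetric homogeneous cubic forms in $\mathbb{R}[a,b,c,d]$ (invariant under all permutations of the four variables), and $\mathcal{P}^{s+}_{4,3}=\{f\in\mathcal{H}^s_{4,3}: f(x)\ge0\text{ for all }x\in\mathbb{R}_{\ge0}^4\}$. *)

From HB Require Import structures.
From mathcomp Require Import all_boot all_order all_algebra.
From mathcomp Require Import mpoly.
Set Implicit Arguments. Unset Strict Implicit. Unset Printing Implicit Defensive.
Import Order.TTheory GRing.Theory Num.Theory.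
Local Open Scope ring_scope.

Definition sym_cubic_form (R : realFieldType) (f : {mpoly R[4]}) : Prop :=
  f \is 3.-homog /\ f \is symmetric.

(* P^{s+}_{4,3} membership (given f in H^s_{4,3}): nonnegative on R_{>=0}^4 *)
Definition nonneg_on_orthant (R : realFieldType) (f : {mpoly R[4]}) : Prop :=
  forall x : 'I_4 -> R, (forall i, 0 <= x i) -> 0 <= f.@[x].

Definition pt4 (R : realFieldType) (a b c d : R) : 'I_4 -> R :=
  fun i => nth 0 [:: a; b; c; d] i.

(* Every symmetric cubic in four variables is A m3 + B m21 + C m111 in terms of the monomial
   symmetric functions, and its values at the four test points are A, 2A + 2B, 3A + 6B + C and
   4A + 12B + 4C.  On the nonnegative orthant the forms m111, m21 - 3 m111 (a sum of terms
   a (b - c)^2), m3 - m21 + 3 m111 (Schur's inequality after subtracting the smallest variable)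
   and 3 m3 - 2 m21 + 3 m111 (a sum of four three-variable Schur forms) are nonnegative, and
   they span the extremal rays of the cone cut out by the four test values: every cubic with
   nonnegative test values is a nonnegative combination of three of them. *)

From HB Require Import structures.
From mathcomp Require Import all_boot all_order all_algebra.
From mathcomp Require Import perm mpoly ring lra.
Set Implicit Arguments. Unset Strict Implicit. Unset Printing Implicit Defensive.
Import Order.TTheory GRing.Theory Num.Theory.
Local Open Scope ring_scope.

Lemma mcoeff_sym_perm_eq (n : nat) (R : nzRingType) (p : {mpoly R[n]}) (m m' : 'X_{1..n}) :
  p \is symmetric -> perm_eq m m' -> p@_m = p@_m'.
Proof.
move=> p_sym /tuple_permP[s m_def].
rewrite -(msym_coeff m' s p_sym); congr (_@__).
by apply/val_inj/val_inj; rewrite /= m_def.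
Qed.

Lemma meval_seq (n : nat) (R : comNzRingType) (p : {mpoly R[n]}) (v : 'I_n -> R)
    (s : seq 'X_{1..n}) :
  uniq s -> {subset msupp p <= s} -> p.@[v] = \sum_(m <- s) p@_m * \prod_i v i ^+ m i.
Proof.
move=> s_uniq supp_s; rewrite mevalE [RHS](bigID (mem (msupp p))) /=.
rewrite [X in _ + X]big1 ?addr0 => [|m]; last first.
  by rewrite mcoeff_msupp negbK => /eqP->; rewrite mul0r.
rewrite -[RHS]big_filter; apply: perm_big; apply: uniq_perm; rewrite ?filter_uniq ?msupp_uniq //.
by move=> m; rewrite mem_filter; case: (boolP (m \in msupp p)) => [/supp_s ->|].
Qed.

Definition mnm4 (a b c d : nat) : 'X_{1..4} := Multinom [tuple a; b; c; d].

Definition i0 : 'I_4 := Ordinal (isT : 0 < 4)%N.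
Definition i1 : 'I_4 := Ordinal (isT : 1 < 4)%N.
Definition i2 : 'I_4 := Ordinal (isT : 2 < 4)%N.
Definition i3 : 'I_4 := Ordinal (isT : 3 < 4)%N.

Lemma mnm4E (m : 'X_{1..4}) : m = mnm4 (m i0) (m i1) (m i2) (m i3).
Proof.
by apply/mnmP => -[[|[|[|[|i]]]] lt_i4] //; rewrite !mnm_tnth; congr tnth; apply: val_inj.
Qed.

Lemma mdeg_mnm4 a b c d : mdeg (mnm4 a b c d) = (a + b + c + d)%N.
Proof. by rewrite mdegE !big_ord_recr big_ord0. Qed.

Lemma prod_mnm4 (R : comNzRingType) (x : 'I_4 -> R) a b c d :
  \prod_i x i ^+ mnm4 a b c d i = x i0 ^+ a * x i1 ^+ b * x i2 ^+ c * x i3 ^+ d.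
Proof.
rewrite !big_ord_recr big_ord0 /= mul1r.
by congr (x _ ^+ _ * x _ ^+ _ * x _ ^+ _ * x _ ^+ _); apply: val_inj.
Qed.

Definition orbit3 := [:: mnm4 3 0 0 0; mnm4 0 3 0 0; mnm4 0 0 3 0; mnm4 0 0 0 3].
Definition orbit21 :=
  [:: mnm4 2 1 0 0; mnm4 2 0 1 0; mnm4 2 0 0 1; mnm4 1 2 0 0; mnm4 0 2 1 0; mnm4 0 2 0 1;
      mnm4 1 0 2 0; mnm4 0 1 2 0; mnm4 0 0 2 1; mnm4 1 0 0 2; mnm4 0 1 0 2; mnm4 0 0 1 2].
Definition orbit111 := [:: mnm4 1 1 1 0; mnm4 1 1 0 1; mnm4 1 0 1 1; mnm4 0 1 1 1].
Definition cubic_monomials := orbit3 ++ orbit21 ++ orbit111.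

Lemma cubic_monomials_uniq : uniq cubic_monomials.
Proof. by []. Qed.

Lemma mem_cubic_monomials (m : 'X_{1..4}) : mdeg m = 3%N -> m \in cubic_monomials.
Proof.
rewrite [m]mnm4E mdeg_mnm4; move: (m i0) (m i1) (m i2) (m i3) => a b c d.
by case: a => [|[|[|[|a]]]]; case: b => [|[|[|[|b]]]]; case: c => [|[|[|[|c]]]];
   case: d => [|[|[|[|d]]]] //; rewrite ?addnS ?addSn.
Qed.

Section SymmetricCubics.
Variable R : comNzRingType.
Implicit Types a b c d A B C : R.

Definition m3 a b c d := a ^+ 3 + b ^+ 3 + c ^+ 3 + d ^+ 3.
Definition m21 a b c d := a ^+ 2 * (b + c + d) + b ^+ 2 * (a + c + d)
                        + c ^+ 2 * (a + b + d) + d ^+ 2 * (a + b + c).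
Definition m111 a b c d := a * b * c + a * b * d + a * c * d + b * c * d.
Definition sym_cubic A B C a b c d := A * m3 a b c d + B * m21 a b c d + C * m111 a b c d.

Lemma meval_sym_cubic (f : {mpoly R[4]}) (x : 'I_4 -> R) :
  f \is 3.-homog -> f \is symmetric ->
  f.@[x] = sym_cubic f@_(mnm4 3 0 0 0) f@_(mnm4 2 1 0 0) f@_(mnm4 1 1 1 0)
                     (x i0) (x i1) (x i2) (x i3).
Proof.
move=> f_homog f_sym.
have orbit_sum (m0 : 'X_{1..4}) (orbit : seq 'X_{1..4}) :
    all (fun m : 'X_{1..4} => perm_eq m m0) orbit ->
    \sum_(m <- orbit) f@_m * \prod_i x i ^+ m i
      = f@_m0 * \sum_(m <- orbit) \prod_i x i ^+ m i.
  move=> /allP orbit_perm; rewrite big_distrr; apply: eq_big_seq => m /orbit_perm m_m0.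
  by rewrite (mcoeff_sym_perm_eq f_sym m_m0).
rewrite (meval_seq x cubic_monomials_uniq); last first.
  by move=> m /(dhomog_mf f_homog) /mem_cubic_monomials.
rewrite !big_cat (orbit_sum (mnm4 3 0 0 0)) // (orbit_sum (mnm4 2 1 0 0)) //.
rewrite (orbit_sum (mnm4 1 1 1 0)) // !big_cons big_nil !prod_mnm4.
by rewrite /sym_cubic /m3 /m21 /m111 /=; ring.
Qed.

End SymmetricCubics.

Section SchurInequalities.
Variable R : realFieldType.
Implicit Types a b c d x y z : R.

Definition schur x y z := x * (x - y) * (x - z) + y * (y - x) * (y - z) + z * (z - x) * (z - y).

Lemma schur_sorted_ge0 x y z : 0 <= z -> z <= y -> y <= x -> 0 <= schur x y z.
Proof.
move=> z_ge0 zy yx.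
have -> : schur x y z = (x - y) ^+ 2 * (x - z + y) + z * ((x - z) * (y - z)).
  by rewrite /schur; ring.
by rewrite addr_ge0 ?mulr_ge0 ?sqr_ge0 ?subr_ge0 //; lra.
Qed.

Lemma schur_ge0 x y z : 0 <= x -> 0 <= y -> 0 <= z -> 0 <= schur x y z.
Proof.
have schurC12 u v w : schur u v w = schur v u w by rewrite /schur; ring.
have schurC23 u v w : schur u v w = schur u w v by rewrite /schur; ring.
move=> x_ge0 y_ge0 z_ge0.
case: (lerP y x) => yx; case: (lerP z y) => zy; case: (lerP z x) => zx;
  first [ by apply: schur_sorted_ge0; lra
        | by rewrite schurC23; apply: schur_sorted_ge0; lra
        | by rewrite schurC12; apply: schur_sorted_ge0; lra
        | by rewrite schurC12 schurC23; apply: schur_sorted_ge0; lra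
        | by rewrite schurC23 schurC12; apply: schur_sorted_ge0; lra
        | by rewrite schurC12 schurC23 schurC12; apply: schur_sorted_ge0; lra
        | lra ].
Qed.

Definition schur4 a b c d := m3 a b c d - m21 a b c d + 3 * m111 a b c d.

Lemma schur4_min_ge0 a b c d :
  0 <= d -> d <= a -> d <= b -> d <= c -> 0 <= schur4 a b c d.
Proof.
have shift e : d <= e -> exists2 x : R, 0 <= x & e = x + d.
  by move=> de; exists (e - d); rewrite ?subr_ge0 ?subrK.
move=> d_ge0 /shift[x x_ge0 ->] /shift[y y_ge0 ->] /shift[z z_ge0 ->].
have -> : schur4 (x + d) (y + d) (z + d) d = schur x y z + 4 * d ^+ 3
    + 3 * (d ^+ 2 * (x + y + z)) + 2 * (d * (x * y + y * z + z * x)).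
  by rewrite /schur4 /m3 /m21 /m111 /schur; ring.
have := schur_ge0 x_ge0 y_ge0 z_ge0; have := exprn_ge0 3 d_ge0.
have : 0 <= d ^+ 2 * (x + y + z) by rewrite mulr_ge0 ?exprn_ge0 ?addr_ge0.
have : 0 <= d * (x * y + y * z + z * x) by rewrite mulr_ge0 ?addr_ge0 ?mulr_ge0.
lra.
Qed.

Lemma schur4_ge0 a b c d :
  0 <= a -> 0 <= b -> 0 <= c -> 0 <= d -> 0 <= schur4 a b c d.
Proof.
move=> a_ge0 b_ge0 c_ge0 d_ge0.
have schur4_bcda : schur4 a b c d = schur4 b c d a by rewrite /schur4 /m3 /m21 /m111; ring.
have schur4_acdb : schur4 a b c d = schur4 a c d b by rewrite /schur4 /m3 /m21 /m111; ring.
have schur4_abdc : schur4 a b c d = schur4 a b d c by rewrite /schur4 /m3 /m21 /m111; ring.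
(* Comparing a with b, c with d, then the two smaller ones locates a minimal variable. *)
case: (lerP a b) => ab; case: (lerP c d) => cd;
    [case: (lerP a c) | case: (lerP a d) | case: (lerP b c) | case: (lerP b d)] => ?;
  first [ by apply: schur4_min_ge0; lra
        | by rewrite schur4_bcda; apply: schur4_min_ge0; lra
        | by rewrite schur4_acdb; apply: schur4_min_ge0; lra
        | by rewrite schur4_abdc; apply: schur4_min_ge0; lra ].
Qed.

Definition muirhead21 a b c d := m21 a b c d - 3 * m111 a b c d.

Lemma muirhead21_ge0 a b c d :
  0 <= a -> 0 <= b -> 0 <= c -> 0 <= d -> 0 <= muirhead21 a b c d.
Proof.
move=> a_ge0 b_ge0 c_ge0 d_ge0.
have -> : muirhead21 a b c d = (a * (b - c) ^+ 2 + b * (a - c) ^+ 2 + c * (a - b) ^+ 2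
   + a * (b - d) ^+ 2 + b * (a - d) ^+ 2 + d * (a - b) ^+ 2
   + a * (c - d) ^+ 2 + c * (a - d) ^+ 2 + d * (a - c) ^+ 2
   + b * (c - d) ^+ 2 + c * (b - d) ^+ 2 + d * (b - c) ^+ 2) / 2.
  by rewrite /muirhead21 /m21 /m111; field.
by rewrite divr_ge0 ?ler0n // !addr_ge0 // mulr_ge0 ?sqr_ge0.
Qed.

Definition schur_sum a b c d := 3 * m3 a b c d - 2 * m21 a b c d + 3 * m111 a b c d.

Lemma schur_sum_ge0 a b c d :
  0 <= a -> 0 <= b -> 0 <= c -> 0 <= d -> 0 <= schur_sum a b c d.
Proof.
move=> a_ge0 b_ge0 c_ge0 d_ge0.
have -> : schur_sum a b c d = schur a b c + schur a b d + schur a c d + schur b c d.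
  by rewrite /schur_sum /m3 /m21 /m111 /schur; ring.
by do 3 (apply: addr_ge0; last exact: schur_ge0); exact: schur_ge0.
Qed.

Lemma m111_ge0 a b c d :
  0 <= a -> 0 <= b -> 0 <= c -> 0 <= d -> 0 <= m111 a b c d.
Proof. by move=> *; rewrite /m111 !addr_ge0 ?mulr_ge0. Qed.

Lemma sym_cubic_ge0 A B C a b c d :
  0 <= A -> 0 <= 2 * A + 2 * B -> 0 <= 3 * A + 6 * B + C -> 0 <= 4 * A + 12 * B + 4 * C ->
  0 <= a -> 0 <= b -> 0 <= c -> 0 <= d -> 0 <= sym_cubic A B C a b c d.
Proof.
set v2 := 2 * A + 2 * B; set v3 := 3 * A + 6 * B + C; set v4 := 4 * A + 12 * B + 4 * C.
move=> v1_ge0 v2_ge0 v3_ge0 v4_ge0 a_ge0 b_ge0 c_ge0 d_ge0.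
have := schur4_ge0 a_ge0 b_ge0 c_ge0 d_ge0; have := muirhead21_ge0 a_ge0 b_ge0 c_ge0 d_ge0.
have := schur_sum_ge0 a_ge0 b_ge0 c_ge0 d_ge0; have := m111_ge0 a_ge0 b_ge0 c_ge0 d_ge0.
(* The plane 3 v2 = 2 v3 splits the cone of admissible test values into two simplicial cones. *)
have [v32|v23] := lerP (3 * v2) (2 * v3).
- have -> : sym_cubic A B C a b c d = A * schur4 a b c d + (v3 - 3 / 2 * v2) * m111 a b c d
      + v2 / 2 * muirhead21 a b c d.
    by rewrite /sym_cubic /v2 /v3 /schur4 /muirhead21; field.
  move=> *; rewrite !addr_ge0 // mulr_ge0 //; lra.
- have -> : sym_cubic A B C a b c d = v4 / 4 * schur4 a b c d + v3 / 3 * muirhead21 a b c d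
      + (v2 / 2 - v3 / 3) * schur_sum a b c d.
    by rewrite /sym_cubic /v2 /v3 /v4 /schur4 /muirhead21 /schur_sum; field.
  move=> *; rewrite !addr_ge0 // mulr_ge0 //; lra.
Qed.

End SchurInequalities.

Theorem corollary2p8 (R : realFieldType) (f : {mpoly R[4]}) :
  sym_cubic_form f ->
  (nonneg_on_orthant f <->
   [/\ 0 <= f.@[pt4 0 0 0 1], 0 <= f.@[pt4 0 0 1 1],
       0 <= f.@[pt4 0 1 1 1] & 0 <= f.@[pt4 1 1 1 1]]).
Proof.
move=> [f_homog f_sym].
set A := f@_(mnm4 3 0 0 0); set B := f@_(mnm4 2 1 0 0); set C := f@_(mnm4 1 1 1 0).
have f_val x : f.@[x] = sym_cubic A B C (x i0) (x i1) (x i2) (x i3).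
  exact: meval_sym_cubic.
split=> [f_ge0 | ].
  by split; apply: f_ge0 => -[[|[|[|[|i]]]] lt_i4] //=; apply: ler01.
have [-> -> -> ->] : [/\ f.@[pt4 0 0 0 1] = A, f.@[pt4 0 0 1 1] = 2 * A + 2 * B,
    f.@[pt4 0 1 1 1] = 3 * A + 6 * B + C & f.@[pt4 1 1 1 1] = 4 * A + 12 * B + 4 * C].
  by rewrite !f_val /sym_cubic /m3 /m21 /m111 /pt4 /=; split; ring.
by case=> v1 v2 v3 v4 x x_ge0; rewrite f_val; apply: sym_cubic_ge0.
Qed.
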